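(* Let $\mathcal C$ be a small cylinder category. Weak equivalences in $\widetilde{\mathcal C}$ satisfy 2-out-of-3: for composable $f:X\to Y$, $g:Y\to Z$ in $\widetilde{\mathcal C}$, if two of $f$, $g$, $g\circ f$ are weak equivalences then so is the third.
   Context: A cylinder category is a category $\mathcal C$ with two classes of morphisms, the cofibrations and the weak equivalences (morphisms in both classes are called trivial cofibrations), such that: (1) both classes contain all isomorphisms and are closed under composition; (2) weak equivalences satisfy 2-out-of-6: if $f,g,h$ are composable and $f\circ g$, $g\circ h$ are weak equivalences then $f,g,h,f\circ g\circ h$ are; (3) $\mathcal C$ has an initial object $0$ and every $0\to X$ is a cofibration; (4) pushouts of cofibrations along arbitrary maps exist and are cofibrations; (5) pushouts of trivial cofibrations are trivial cofibrations; (6) for every object $X$ the codiagonal $X\sqcup X\to X$ factors as a cofibration $X\sqcup X\hookrightarrow IX$ followed by a weak equivalence $IX\to X$; (7) every trivial cofibration admits a retraction. For a cofibration $A\hookrightarrow B$, a relative cylinder object is a factorization $B\sqcup_A B\hookrightarrow I_AB\xrightarrow{\sim}B$ of the codiagonal into a cofibration followed by a weak equivalence. For a small cylinder category $\mathcal C$, $\widetilde{\mathcal C}$ is the category of presheaves of sets on $\mathcal C$ sending the initial object to a singleton and pushouts along cofibrations to pullbacks of sets; $\mathcal C$ is identified with its image under the Yoneda embedding. A morphism $f:X\to Y$ of $\widetilde{\mathcal C}$ is a weak equivalence if for every cofibration $i:A\hookrightarrow B$ of $\mathcal C$ and every commutative square with top $u:A\to X$ and bottom $w:B\to Y$ (so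 $f\circ u=w\circ i$), there exist $a:B\to X$ with $a\circ i=u$ and $h:I_AB\to Y$ for some relative cylinder object such that $h$ restricted along the two inclusions $B\to I_AB$ is $f\circ a$ and $w$. *)

Unset Implicit Arguments.


Record Category := {
  Ob :> Type;
  Hom : Ob -> Ob -> Type;
  idm : forall X, Hom X X;
  comp : forall X Y Z, Hom Y Z -> Hom X Y -> Hom X Z;
  comp_assoc : forall X Y Z W (h : Hom Z W) (g : Hom Y Z) (f : Hom X Y),
      comp X Z W h (comp X Y Z g f) = comp X Y W (comp Y Z W h g) f;
  comp_id_l : forall X Y (f : Hom X Y), comp X Y Y (idm Y) f = f;
  comp_id_r : forall X Y (f : Hom X Y), comp X X Y f (idm X) = f
}.

Arguments Hom {c} X Y.
Arguments idm {c} X.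
Arguments comp {c X Y Z} g f.

Definition is_iso {C : Category} {X Y : C} (f : Hom X Y) : Prop :=
  exists g : Hom Y X, comp g f = idm X /\ comp f g = idm Y.

Definition is_initial {C : Category} (O : C) : Prop :=
  forall X : C, exists u : Hom O X, forall v : Hom O X, v = u.

(* The commutative square
      A --i--> B
      |f       |g
      v        v
      C --k--> D
   is a pushout square. *)
Definition is_pushout {C : Category} {A B C' D : C}
  (i : Hom A B) (f : Hom A C') (g : Hom B D) (k : Hom C' D) : Prop :=
  comp g i = comp k f /\
  forall (T : C) (b : Hom B T) (c : Hom C' T), comp b i = comp c f ->
    exists d : Hom D T, (comp d g = b /\ comp d k = c) /\
      forall d' : Hom D T, comp d' g = b -> comp d' k = c -> d' = d.

Record CylinderCategory := {
  cat :> Category;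
  cof : forall X Y : cat, Hom X Y -> Prop;
  we  : forall X Y : cat, Hom X Y -> Prop;
  iso_cof : forall (X Y : cat) (f : Hom X Y), is_iso f -> cof _ _ f;
  iso_we  : forall (X Y : cat) (f : Hom X Y), is_iso f -> we _ _ f;
  cof_comp : forall (X Y Z : cat) (g : Hom Y Z) (f : Hom X Y),
      cof _ _ f -> cof _ _ g -> cof _ _ (comp g f);
  we_comp : forall (X Y Z : cat) (g : Hom Y Z) (f : Hom X Y),
      we _ _ f -> we _ _ g -> we _ _ (comp g f);
  we_2of6 : forall (W X Y Z : cat) (h : Hom W X) (g : Hom X Y) (f : Hom Y Z),
      we _ _ (comp f g) -> we _ _ (comp g h) ->
      we _ _ f /\ we _ _ g /\ we _ _ h /\ we _ _ (comp f (comp g h));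
  init : cat;
  init_initial : is_initial init;
  init_cof : forall (X : cat) (u : Hom init X), cof _ _ u;
  pushout_exists : forall (A B C' : cat) (i : Hom A B) (f : Hom A C'),
      cof _ _ i -> exists (D : cat) (g : Hom B D) (k : Hom C' D), is_pushout i f g k;
  pushout_cof : forall (A B C' D : cat) (i : Hom A B) (f : Hom A C')
      (g : Hom B D) (k : Hom C' D), cof _ _ i -> is_pushout i f g k -> cof _ _ k;
  pushout_tcof : forall (A B C' D : cat) (i : Hom A B) (f : Hom A C')
      (g : Hom B D) (k : Hom C' D), cof _ _ i -> we _ _ i -> is_pushout i f g k ->
      cof _ _ k /\ we _ _ k;
  (* (6) the codiagonal X + X -> X (coproduct = pushout over the initial
     object) factors as a cofibration followed by a weak equivalence *)
  cylinder : forall X : cat,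
      exists (S : cat) (in1 in2 : Hom X S) (u : Hom init X),
        is_pushout u u in1 in2 /\
        exists (I : cat) (j : Hom S I) (p : Hom I X),
          cof _ _ j /\ we _ _ p /\ comp p (comp j in1) = idm X /\ comp p (comp j in2) = idm X;
  tcof_retraction : forall (A B : cat) (i : Hom A B),
      cof _ _ i -> we _ _ i -> exists r : Hom B A, comp r i = idm A
}.

Arguments cof {c X Y} _.
Arguments we {c X Y} _.
Arguments init c : clear implicits.

(* Relative cylinder for a cofibration i : A -> B, together with the two
   inclusions j0, j1 : B -> I_A B: there is a pushout B +_A B (of i along i)
   with injections in1, in2, and a factorization of the codiagonal
   B +_A B -> B as a cofibration j : B +_A B -> I followed by a weak
   equivalence p : I -> B.  (p o j is the codiagonal iff p o j o in1 = id and
   p o j o in2 = id, by the universal property.)  j0 = j o in1, j1 = j o in2. *)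
Definition rel_cylinder {C : CylinderCategory} {A B : C} (i : Hom A B)
  (I : C) (j0 j1 : Hom B I) : Prop :=
  exists (P : C) (in1 in2 : Hom B P) (j : Hom P I) (p : Hom I B),
    is_pushout i i in1 in2 /\ cof j /\ we p /\
    comp p (comp j in1) = idm B /\ comp p (comp j in2) = idm B /\
    j0 = comp j in1 /\ j1 = comp j in2.

(* ---------- The category C~ of "left exact" presheaves ---------- *)
Record Presheaf (C : CylinderCategory) := {
  ps :> C -> Type;
  psmap : forall X Y : C, Hom X Y -> ps Y -> ps X;
  psmap_id : forall (X : C) (x : ps X), psmap X X (idm X) x = x;
  psmap_comp : forall (X Y Z : C) (g : Hom Y Z) (f : Hom X Y) (z : ps Z),
      psmap X Z (comp g f) z = psmap X Y f (psmap Y Z g z);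
  ps_init : exists x0 : ps (init C), forall x : ps (init C), x = x0;
  ps_pushout : forall (A B C' D : C) (i : Hom A B) (f : Hom A C')
      (g : Hom B D) (k : Hom C' D), cof i -> is_pushout i f g k ->
      forall (b : ps B) (c : ps C'), psmap A B i b = psmap A C' f c ->
        exists d : ps D, (psmap B D g d = b /\ psmap C' D k d = c) /\
          forall d' : ps D, psmap B D g d' = b -> psmap C' D k d' = c -> d' = d
}.

Arguments psmap {C} p {X Y} f _.

Record PMor {C : CylinderCategory} (F G : Presheaf C) := {
  pm :> forall X : C, F X -> G X;
  pm_nat : forall (X Y : C) (f : Hom X Y) (y : F Y),
      pm X (psmap F f y) = psmap G f (pm Y y)
}.

Arguments pm {C F G} _ X _.
Arguments pm_nat {C F G} _ {X Y} f y.

Definition pmor_comp {C : CylinderCategory} {F G H : Presheaf C}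
  (g : PMor G H) (f : PMor F G) : PMor F H.
Proof.
  refine {| pm := fun X x => g X (f X x) |}.
  intros X Y h y. rewrite (pm_nat f), (pm_nat g). reflexivity.
Defined.

(* By Yoneda, a map u : A -> X from a representable (A in C) to X in C~ is
   an element u of X(A), and precomposition with a : A' -> A is psmap X a.
   Weak equivalences of C~: *)
Definition pweq {C : CylinderCategory} {X Y : Presheaf C} (f : PMor X Y) : Prop :=
  forall (A B : C) (i : Hom A B), cof i ->
  forall (u : X A) (w : Y B), f A u = psmap Y i w ->
    exists a : X B, psmap X i a = u /\
      exists (I : C) (j0 j1 : Hom B I) (h : Y I),
        rel_cylinder i I j0 j1 /\
        psmap Y j0 h = f B a /\ psmap Y j1 h = w.

(* A map of C~ is a weak equivalence when it lifts against cofibrations up to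
   homotopy relative to the source. Weak equivalences compose because relative
   homotopies concatenate: two relative cylinders glued along a common end form one.
   If g and g ∘ f are weak equivalences, the ends f a and w of the lifting problem for f
   glue to an element of Y(B +_A B), and lifting it through g against the cofibration
   B +_A B -> I_A B produces the homotopy from f a to w.
   If f and g ∘ f are weak equivalences, u is first replaced by a homotopic f x
   (lifting against 0 -> A along a cylinder IA of A); the square is then extended along
   the trivial cofibration B -> E = B +_A IA and lifted through g ∘ f there. The
   resulting homotopy relative to A becomes one relative to IA by doubling its cylinder
   along the corner IA +_A E, whose inclusion into the cylinder is a trivial cofibration
   and so has a retraction; restricted to B it solves the original problem. *)


Local Notation "g ∘ f" := (comp g f) (at level 40, left associativity).

#[local] Arguments cof_comp {c X Y Z g f} _ _.
#[local] Arguments we_comp {c X Y Z g f} _ _.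
#[local] Arguments iso_cof {c X Y f} _.
#[local] Arguments iso_we {c X Y f} _.
#[local] Arguments init_cof {c X} u.
#[local] Arguments pushout_exists {c A B C'} i f _.
#[local] Arguments pushout_cof {c A B C' D i f g k} _ _.
#[local] Arguments pushout_tcof {c A B C' D i f g k} _ _ _.
#[local] Arguments tcof_retraction {c A B i} _ _.
#[local] Arguments ps_pushout {C} p {A B C' D i f g k} _ _ b c _.

Lemma compA {C : Category} {X Y Z W : C} (h : Hom Z W) (g : Hom Y Z) (f : Hom X Y) :
  h ∘ (g ∘ f) = h ∘ g ∘ f.
Proof. apply comp_assoc. Qed.

Lemma comp1f {C : Category} {X Y : C} (f : Hom X Y) : idm Y ∘ f = f.
Proof. apply comp_id_l. Qed.

Lemma compf1 {C : Category} {X Y : C} (f : Hom X Y) : f ∘ idm X = f.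
Proof. apply comp_id_r. Qed.

Ltac comp_norm := repeat rewrite <- compA; repeat rewrite comp1f; repeat rewrite compf1.

Lemma eq_precomp {C : Category} {X Y Y' Z W : C}
  (a : Hom Y Z) (b : Hom X Y) (c : Hom Y' Z) (d : Hom X Y') (y : Hom W X) :
  a ∘ b = c ∘ d -> a ∘ (b ∘ y) = c ∘ (d ∘ y).
Proof. intros E. rewrite !compA, E. reflexivity. Qed.

Section Pushouts.
Context {C : Category}.

Lemma pushout_comm {A B C' D : C} {i : Hom A B} {f : Hom A C'} {g : Hom B D} {k : Hom C' D} :
  is_pushout i f g k -> g ∘ i = k ∘ f.
Proof. intros [H _]; exact H. Qed.

Lemma pushout_sym {A B C' D : C} {i : Hom A B} {f : Hom A C'} {g : Hom B D} {k : Hom C' D} :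
  is_pushout i f g k -> is_pushout f i k g.
Proof.
  intros [Hc Hu]. split; [symmetry; exact Hc|].
  intros T b c Hbc. destruct (Hu T c b (eq_sym Hbc)) as [d [[H1 H2] H3]].
  exists d. split; [split; assumption|]. intros d' H1' H2'. apply H3; assumption.
Qed.

Lemma pushout_factor {A B C' D : C} {i : Hom A B} {f : Hom A C'} {g : Hom B D} {k : Hom C' D} :
  is_pushout i f g k -> forall T (b : Hom B T) (c : Hom C' T), b ∘ i = c ∘ f ->
  exists d, d ∘ g = b /\ d ∘ k = c.
Proof. intros [_ Hu] T b c E. destruct (Hu T b c E) as [d [H _]]. exists d; exact H. Qed.

Lemma pushout_ext {A B C' D : C} {i : Hom A B} {f : Hom A C'} {g : Hom B D} {k : Hom C' D} :
  is_pushout i f g k ->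
  forall T (d d' : Hom D T), d ∘ g = d' ∘ g -> d ∘ k = d' ∘ k -> d = d'.
Proof.
  intros [Hc Hu] T d d' E1 E2.
  destruct (Hu T (d ∘ g) (d ∘ k)) as [e [_ He]].
  { comp_norm. rewrite Hc. reflexivity. }
  transitivity e; [apply He; reflexivity | symmetry; apply He; symmetry; assumption].
Qed.

Lemma pushout_paste {A B C' D B' D' : C} {i : Hom A B} {f : Hom A C'} {g : Hom B D}
  {k : Hom C' D} {i' : Hom B B'} {g' : Hom B' D'} {k' : Hom D D'} :
  is_pushout i f g k -> is_pushout i' g g' k' -> is_pushout (i' ∘ i) f g' (k' ∘ k).
Proof.
  intros H1 H2. split.
  - comp_norm. rewrite (eq_precomp _ _ _ _ _ (pushout_comm H2)), (pushout_comm H1).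
    reflexivity.
  - intros T b c E.
    destruct (pushout_factor H1 T (b ∘ i') c) as [d1 [Hd1g Hd1k]]; [comp_norm; exact E|].
    destruct (pushout_factor H2 T b d1) as [d [Hdg Hdk]]; [symmetry; exact Hd1g|].
    exists d. split; [split; [exact Hdg | rewrite compA, Hdk; exact Hd1k]|].
    intros d' H1' H2'.
    assert (Ed1 : d' ∘ k' = d1).
    { apply (pushout_ext H1).
      - rewrite Hd1g, <- compA, <- (pushout_comm H2), compA, H1'. reflexivity.
      - rewrite Hd1k, <- compA. exact H2'. }
    apply (pushout_ext H2); [rewrite H1', Hdg | rewrite Ed1, Hdk]; reflexivity.
Qed.

Lemma pushout_cancel {A B C' D B' D' : C} {i : Hom A B} {f : Hom A C'} {g : Hom B D}
  {k : Hom C' D} {i' : Hom B B'} {g' : Hom B' D'} {k' : Hom D D'} :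
  is_pushout i f g k -> is_pushout (i' ∘ i) f g' (k' ∘ k) -> k' ∘ g = g' ∘ i' ->
  is_pushout i' g g' k'.
Proof.
  intros H1 H12 Hc. split; [symmetry; exact Hc|].
  intros T b c E.
  destruct (pushout_factor H12 T b (c ∘ k)) as [d [Hdg Hdk]].
  { comp_norm. rewrite (eq_precomp _ _ _ _ _ E), (pushout_comm H1). reflexivity. }
  assert (Hdk' : d ∘ k' = c).
  { apply (pushout_ext H1).
    - comp_norm. rewrite Hc, compA, Hdg. exact E.
    - comp_norm. exact Hdk. }
  exists d. split; [split; assumption|].
  intros d' H1' H2'. apply (pushout_ext H12).
  - rewrite H1', Hdg. reflexivity.
  - rewrite !compA, H2', Hdk'. reflexivity.
Qed.

Lemma pushout_unique_iso {A B C' D D' : C} {i : Hom A B} {f : Hom A C'}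
  {g : Hom B D} {k : Hom C' D} {g' : Hom B D'} {k' : Hom C' D'} :
  is_pushout i f g k -> is_pushout i f g' k' ->
  exists phi : Hom D D', is_iso phi /\ phi ∘ g = g' /\ phi ∘ k = k'.
Proof.
  intros H H'.
  destruct (pushout_factor H D' g' k' (pushout_comm H')) as [phi [Hphi1 Hphi2]].
  destruct (pushout_factor H' D g k (pushout_comm H)) as [psi [Hpsi1 Hpsi2]].
  exists phi. split; [|split; assumption].
  exists psi. split.
  - apply (pushout_ext H); comp_norm; [rewrite Hphi1, Hpsi1 | rewrite Hphi2, Hpsi2];
      reflexivity.
  - apply (pushout_ext H'); comp_norm; [rewrite Hpsi1, Hphi1 | rewrite Hpsi2, Hphi2];
      reflexivity.
Qed.

(* With D = B +_A C' and D' = B' +_A C', the induced map n : B +_A B' -> D +_C' D'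
   is a cobase change of f. *)
Lemma pushout_doubling {A B B' C' D D' PB PD : C} {i : Hom A B} {i' : Hom A B'}
  {f : Hom A C'} {g : Hom B D} {k : Hom C' D} {g' : Hom B' D'} {k' : Hom C' D'}
  {b1 : Hom B PB} {b2 : Hom B' PB} {d1 : Hom D PD} {d2 : Hom D' PD} {n : Hom PB PD} :
  is_pushout i f g k -> is_pushout i' f g' k' ->
  is_pushout i i' b1 b2 -> is_pushout k k' d1 d2 ->
  n ∘ b1 = d1 ∘ g -> n ∘ b2 = d2 ∘ g' ->
  is_pushout f (b1 ∘ i) (d1 ∘ k) n.
Proof.
  intros H1 H2 HB HD En1 En2. split.
  - comp_norm. rewrite (eq_precomp _ _ _ _ _ En1), (pushout_comm H1). reflexivity.
  - intros T b c E.
    destruct (pushout_factor H1 T (c ∘ b1) b) as [e1 [He1g He1k]];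
      [comp_norm; symmetry; exact E|].
    destruct (pushout_factor H2 T (c ∘ b2) b) as [e2 [He2g He2k]].
    { comp_norm. rewrite <- (pushout_comm HB), E. comp_norm. reflexivity. }
    destruct (pushout_factor HD T e1 e2) as [d [Hd1 Hd2]];
      [rewrite He1k, He2k; reflexivity|].
    exists d. split; [split|].
    + rewrite compA, Hd1. exact He1k.
    + apply (pushout_ext HB); comp_norm; [rewrite En1, compA, Hd1 | rewrite En2, compA, Hd2];
        assumption.
    + intros d' Hd'k Hd'n. apply (pushout_ext HD).
      * rewrite Hd1. apply (pushout_ext H1).
        -- rewrite He1g, <- Hd'n. comp_norm. rewrite En1. reflexivity.
        -- rewrite He1k, <- Hd'k. comp_norm. reflexivity.
      * rewrite Hd2. apply (pushout_ext H2).
        -- rewrite He2g, <- Hd'n. comp_norm. rewrite En2. reflexivity.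
        -- rewrite He2k, <- Hd'k. comp_norm. rewrite (pushout_comm HD). reflexivity.
Qed.

End Pushouts.

Section CylinderCategories.
Context {C : CylinderCategory}.

Lemma we_id (X : C) : we (idm X).
Proof. apply iso_we. exists (idm X). split; apply comp1f. Qed.

Lemma we_cancel_r {X Y Z : C} (g : Hom Y Z) (h : Hom X Y) : we h -> we (g ∘ h) -> we g.
Proof.
  intros Hh Hgh.
  apply (we_2of6 C X X Y Z (idm X) h g); [exact Hgh | rewrite compf1; exact Hh].
Qed.

Lemma we_cancel_l {X Y Z : C} (g : Hom Y Z) (h : Hom X Y) : we g -> we (g ∘ h) -> we h.
Proof.
  intros Hg Hgh.
  apply (we_2of6 C X Y Z Z h g (idm Z)); [rewrite comp1f; exact Hg | exact Hgh].
Qed.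

Lemma we_section {X Y : C} (p : Hom Y X) (h : Hom X Y) : we p -> p ∘ h = idm X -> we h.
Proof. intros Hp E. apply (we_cancel_l p h Hp). rewrite E. apply we_id. Qed.

Lemma we_retraction {X Y : C} (r : Hom Y X) (h : Hom X Y) : we h -> r ∘ h = idm X -> we r.
Proof. intros Hh E. apply (we_cancel_r r h Hh). rewrite E. apply we_id. Qed.

Lemma rel_cylinder_ends_tcof {A B I : C} (i : Hom A B) (j0 j1 : Hom B I) :
  cof i -> rel_cylinder i I j0 j1 -> (cof j0 /\ we j0) /\ (cof j1 /\ we j1).
Proof.
  intros Hi [P [in1 [in2 [j [p [HP [Hj [Hp [Hp1 [Hp2 [-> ->]]]]]]]]]]].
  split; split.
  - exact (cof_comp (pushout_cof Hi (pushout_sym HP)) Hj).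
  - exact (we_section p _ Hp Hp1).
  - exact (cof_comp (pushout_cof Hi HP) Hj).
  - exact (we_section p _ Hp Hp2).
Qed.

(* Up to isomorphism, n is a cobase change of j followed by one of j'. *)
Lemma cof_pushout_map {D P P' J J' V Q : C} (t : Hom D P) (t' : Hom D P')
  (j : Hom P J) (j' : Hom P' J') (v : Hom P V) (v' : Hom P' V)
  (q : Hom J Q) (q' : Hom J' Q) (n : Hom V Q) :
  cof j -> cof j' -> is_pushout t t' v v' -> is_pushout (j ∘ t) (j' ∘ t') q q' ->
  n ∘ v = q ∘ j -> n ∘ v' = q' ∘ j' -> cof n.
Proof.
  intros Hj Hj' HV HQ En En'.
  destruct (pushout_exists j v Hj) as [V1 [w1 [w2 HV1]]].
  pose proof (pushout_paste HV HV1) as HJV1.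
  destruct (pushout_exists j' (w2 ∘ v') Hj') as [Q1 [u' [u HQ1]]].
  pose proof (pushout_sym (pushout_paste (pushout_sym HJV1) HQ1)) as HQ1'.
  destruct (pushout_unique_iso HQ1' HQ) as [phi [Hphi [Hphi1 Hphi2]]].
  assert (Hn : n = phi ∘ (u ∘ w2)).
  { apply (pushout_ext HV); comp_norm.
    - rewrite En, <- (pushout_comm HV1), (compA u), (compA phi), Hphi1. reflexivity.
    - rewrite En', <- (pushout_comm HQ1), compA, Hphi2. reflexivity. }
  rewrite Hn.
  exact (cof_comp (cof_comp (pushout_cof Hj HV1) (pushout_cof Hj' HQ1)) (iso_cof Hphi)).
Qed.

Lemma rel_cylinder_concat {A B I I' K : C} (i : Hom A B) (j0 j1 : Hom B I)
  (j0' j1' : Hom B I') (z : Hom I K) (z' : Hom I' K) :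
  cof i -> rel_cylinder i I j0 j1 -> rel_cylinder i I' j0' j1' ->
  is_pushout j1 j0' z z' -> rel_cylinder i K (z ∘ j0) (z' ∘ j1').
Proof.
  intros Hi Hcyl Hcyl' HK.
  destruct (rel_cylinder_ends_tcof i j0 j1 Hi Hcyl) as [_ [Hj1c Hj1w]].
  destruct Hcyl as [P [a1 [a2 [jI [pI [HP [HjI [HpI [Hp1 [Hp2 [-> ->]]]]]]]]]]].
  destruct Hcyl' as [P' [a1' [a2' [jI' [pI' [HP' [HjI' [HpI' [Hp1' [Hp2' [-> ->]]]]]]]]]]].
  destruct (pushout_exists i i Hi) as [Pi [b1 [b2 HPi]]].
  destruct (pushout_exists a2 a1' (pushout_cof Hi HP)) as [T [t [t' HT]]].
  destruct (pushout_factor HPi T (t ∘ a1) (t' ∘ a2')) as [m [Hm1 Hm2]].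
  { comp_norm. rewrite (pushout_comm HP), (eq_precomp _ _ _ _ _ (pushout_comm HT)),
      (pushout_comm HP'). reflexivity. }
  pose proof (pushout_doubling HP (pushout_sym HP') HPi HT Hm1 Hm2) as Hm.
  destruct (pushout_factor HT K (z ∘ jI) (z' ∘ jI')) as [n [Hn1 Hn2]].
  { comp_norm. exact (pushout_comm HK). }
  pose proof (cof_pushout_map a2 a1' jI jI' t t' z z' n HjI HjI' HT HK Hn1 Hn2) as Hn.
  destruct (pushout_factor HK B pI pI') as [pK [HpK1 HpK2]]; [rewrite Hp2, Hp1'; reflexivity|].
  assert (HpK : we pK).
  { destruct (pushout_tcof Hj1c Hj1w HK) as [_ Hz'w].
    apply (we_cancel_r pK z' Hz'w). rewrite HpK2. exact HpI'. }
  exists Pi, b1, b2, (n ∘ m), pK. split; [exact HPi|]. repeat split.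
  - exact (cof_comp (pushout_cof Hi Hm) Hn).
  - exact HpK.
  - comp_norm. rewrite Hm1, (compA n), Hn1. comp_norm. rewrite (compA pK), HpK1. exact Hp1.
  - comp_norm. rewrite Hm2, (compA n), Hn2. comp_norm. rewrite (compA pK), HpK2. exact Hp2'.
  - comp_norm. rewrite Hm1, (compA n), Hn1. comp_norm. reflexivity.
  - comp_norm. rewrite Hm2, (compA n), Hn2. comp_norm. reflexivity.
Qed.

(* The weak equivalence K -> B is the old one followed by a retraction of k. *)
Lemma rel_cylinder_cobase_change {A B C0 E K : C} (i : Hom A B) (h : Hom A C0)
  (k : Hom B E) (l : Hom C0 E) (j0 j1 : Hom E K) :
  cof i -> cof h -> we h -> is_pushout i h k l ->
  rel_cylinder l K j0 j1 -> rel_cylinder i K (j0 ∘ k) (j1 ∘ k).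
Proof.
  intros Hi Hh Hhw HE [P [e1 [e2 [jK [pK [HP [HjK [HpK [Hp1 [Hp2 [-> ->]]]]]]]]]]].
  destruct (pushout_exists i i Hi) as [Pi [b1 [b2 HPi]]].
  destruct (pushout_factor HPi P (e1 ∘ k) (e2 ∘ k)) as [n [Hn1 Hn2]].
  { comp_norm. rewrite (pushout_comm HE), (eq_precomp _ _ _ _ _ (pushout_comm HP)).
    reflexivity. }
  pose proof (pushout_doubling HE HE HPi HP Hn1 Hn2) as Hn.
  destruct (pushout_tcof Hh Hhw (pushout_sym HE)) as [Hkc Hkw].
  destruct (tcof_retraction Hkc Hkw) as [r Hr].
  exists Pi, b1, b2, (jK ∘ n), (r ∘ pK). split; [exact HPi|]. repeat split.
  - exact (cof_comp (pushout_cof Hh Hn) HjK).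
  - exact (we_comp HpK (we_retraction r k Hkw Hr)).
  - comp_norm. rewrite Hn1, (compA jK), (compA pK), Hp1, comp1f. exact Hr.
  - comp_norm. rewrite Hn2, (compA jK), (compA pK), Hp2, comp1f. exact Hr.
  - comp_norm. rewrite Hn1. reflexivity.
  - comp_norm. rewrite Hn2. reflexivity.
Qed.

(* The comparison map E +_C0 E -> Q factors through P +_D P: first a cobase change
   of m, then the map of [cof_pushout_map]. *)
Lemma rel_cylinder_double {C0 E D P J Q : C} (l : Hom C0 E) (m : Hom C0 D)
  (e : Hom E P) (t : Hom D P) (j : Hom P J) (p : Hom J E) (q1 q2 : Hom J Q) :
  cof l -> cof m -> cof j -> we p -> we (j ∘ t) -> p ∘ (j ∘ e) = idm E ->
  is_pushout l m e t -> is_pushout (j ∘ t) (j ∘ t) q1 q2 ->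
  rel_cylinder l Q (q1 ∘ (j ∘ e)) (q2 ∘ (j ∘ e)).
Proof.
  intros Hl Hm Hj Hp Htw Hpje HP HQ.
  pose proof (pushout_cof Hl HP) as Ht.
  destruct (pushout_exists l l Hl) as [PE [e1 [e2 HPE]]].
  destruct (pushout_exists t t Ht) as [V [v1 [v2 HV]]].
  destruct (pushout_factor HPE V (v1 ∘ e) (v2 ∘ e)) as [n [Hn1 Hn2]].
  { comp_norm. rewrite (pushout_comm HP), (eq_precomp _ _ _ _ _ (pushout_comm HV)).
    reflexivity. }
  pose proof (pushout_doubling HP HP HPE HV Hn1 Hn2) as Hn.
  destruct (pushout_factor HV Q (q1 ∘ j) (q2 ∘ j)) as [n' [Hn'1 Hn'2]].
  { comp_norm. exact (pushout_comm HQ). }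
  pose proof (cof_pushout_map t t j j v1 v2 q1 q2 n' Hj Hj HV HQ Hn'1 Hn'2) as Hn'.
  destruct (pushout_factor HQ E p p) as [pQ [HpQ1 HpQ2]]; [reflexivity|].
  assert (HpQ : we pQ).
  { destruct (pushout_tcof (cof_comp Ht Hj) Htw HQ) as [_ Hq2w].
    apply (we_cancel_r pQ q2 Hq2w). rewrite HpQ2. exact Hp. }
  exists PE, e1, e2, (n' ∘ n), pQ. split; [exact HPE|]. repeat split.
  - exact (cof_comp (pushout_cof Hm Hn) Hn').
  - exact HpQ.
  - comp_norm. rewrite Hn1, (compA n'), Hn'1. comp_norm. rewrite (compA pQ), HpQ1. exact Hpje.
  - comp_norm. rewrite Hn2, (compA n'), Hn'2. comp_norm. rewrite (compA pQ), HpQ2. exact Hpje.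
  - comp_norm. rewrite Hn1, (compA n'), Hn'1. comp_norm. reflexivity.
  - comp_norm. rewrite Hn2, (compA n'), Hn'2. comp_norm. reflexivity.
Qed.

(* D = C0 +_A E is the corner of the cylinder J: E at the bottom end, C0 at the top.
   The map th : D -> E +_A E exhibits the square (l, dC) as a cobase change. *)
Lemma rel_cylinder_corner {A C0 E J : C} (h : Hom A C0) (l : Hom C0 E) (s0 s1 : Hom E J) :
  cof h -> we h -> cof l -> rel_cylinder (l ∘ h) J s0 s1 ->
  exists (D : C) (dC : Hom C0 D) (dE : Hom E D) (tau : Hom D J),
    is_pushout h (l ∘ h) dC dE /\ tau ∘ dC = s1 ∘ l /\ tau ∘ dE = s0 /\
    cof tau /\ we tau /\
    forall (Q : C) (q1 q2 : Hom J Q), is_pushout tau tau q1 q2 ->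
      rel_cylinder l Q (q1 ∘ s1) (q2 ∘ s1).
Proof.
  intros Hh Hhw Hl [P [a1 [a2 [jJ [pJ [HP [HjJ [HpJ [Hp1 [Hp2 [-> ->]]]]]]]]]]].
  destruct (pushout_exists h (l ∘ h) Hh) as [D [dC [dE HD]]].
  destruct (pushout_tcof Hh Hhw HD) as [_ HdEw].
  pose proof (pushout_cof (cof_comp Hh Hl) (pushout_sym HD)) as HdC.
  destruct (pushout_factor HD P (a2 ∘ l) a1) as [th [Hth1 Hth2]].
  { comp_norm. symmetry. exact (pushout_comm HP). }
  assert (Hcorner : is_pushout l dC a2 th).
  { apply (pushout_cancel HD); [rewrite Hth2; exact (pushout_sym HP) | exact Hth1]. }
  assert (Htauw : we (jJ ∘ th)).
  { apply (we_cancel_l pJ _ HpJ), (we_retraction _ dE HdEw).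
    comp_norm. rewrite Hth2. exact Hp1. }
  exists D, dC, dE, (jJ ∘ th). split; [exact HD|]. repeat split.
  - comp_norm. rewrite Hth1. reflexivity.
  - comp_norm. rewrite Hth2. reflexivity.
  - exact (cof_comp (pushout_cof Hl Hcorner) HjJ).
  - exact Htauw.
  - intros Q q1 q2 HQ. comp_norm.
    exact (rel_cylinder_double l dC a2 th jJ pJ q1 q2 Hl HdC HjJ HpJ Htauw Hp2 Hcorner HQ).
Qed.

End CylinderCategories.

Section Presheaves.
Context {C : CylinderCategory}.

Lemma psmap_glue (F : Presheaf C) {A B C' D : C} {i : Hom A B} {f : Hom A C'}
  {g : Hom B D} {k : Hom C' D} :
  cof i -> is_pushout i f g k -> forall (b : F B) (c : F C'), psmap F i b = psmap F f c ->
  exists d : F D, psmap F g d = b /\ psmap F k d = c.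
Proof.
  intros Hi HP b c E. destruct (ps_pushout F Hi HP b c E) as [d [H _]]. exists d; exact H.
Qed.

Lemma psmap_ext (F : Presheaf C) {A B C' D : C} {i : Hom A B} {f : Hom A C'}
  {g : Hom B D} {k : Hom C' D} :
  cof i -> is_pushout i f g k -> forall d d' : F D,
  psmap F g d = psmap F g d' -> psmap F k d = psmap F k d' -> d = d'.
Proof.
  intros Hi HP d d' E1 E2.
  assert (E : psmap F i (psmap F g d) = psmap F f (psmap F k d)).
  { rewrite <- !psmap_comp, (pushout_comm HP). reflexivity. }
  destruct (ps_pushout F Hi HP _ _ E) as [e [_ He]].
  transitivity e; [apply He; reflexivity | symmetry; apply He; symmetry; assumption].
Qed.

(* [pweq f] unfolds to: every lifting problem (u, w) along a cofibration i has a
   solution a with [htpy Y i (f B a) w]. *)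
Definition htpy (F : Presheaf C) {A B : C} (i : Hom A B) (x x' : F B) : Prop :=
  exists (I : C) (j0 j1 : Hom B I) (h : F I),
    rel_cylinder i I j0 j1 /\ psmap F j0 h = x /\ psmap F j1 h = x'.

Lemma htpy_map {Y Z : Presheaf C} (g : PMor Y Z) {A B : C} (i : Hom A B) (y y' : Y B) :
  htpy Y i y y' -> htpy Z i (g B y) (g B y').
Proof.
  intros [I [j0 [j1 [h [Hcyl [<- <-]]]]]].
  exists I, j0, j1, (g I h). split; [exact Hcyl | split; symmetry; apply pm_nat].
Qed.

Lemma htpy_trans (F : Presheaf C) {A B : C} (i : Hom A B) (x x' x'' : F B) :
  cof i -> htpy F i x x' -> htpy F i x' x'' -> htpy F i x x''.
Proof.
  intros Hi [I [j0 [j1 [h [Hcyl [Hh0 Hh1]]]]]] [I' [j0' [j1' [h' [Hcyl' [Hh0' Hh1']]]]]].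
  destruct (rel_cylinder_ends_tcof i j0 j1 Hi Hcyl) as [_ [Hj1 _]].
  destruct (pushout_exists j1 j0' Hj1) as [K [z [z' HK]]].
  destruct (psmap_glue F Hj1 HK h h') as [k [Hkz Hkz']]; [rewrite Hh1, Hh0'; reflexivity|].
  exists K, (z ∘ j0), (z' ∘ j1'), k.
  split; [exact (rel_cylinder_concat i j0 j1 j0' j1' z z' Hi Hcyl Hcyl' HK)|].
  rewrite !psmap_comp, Hkz, Hkz'. split; assumption.
Qed.

Lemma htpy_cobase_change (F : Presheaf C) {A B C0 E : C} (i : Hom A B) (h : Hom A C0)
  (k : Hom B E) (l : Hom C0 E) (x x' : F E) :
  cof i -> cof h -> we h -> is_pushout i h k l ->
  htpy F l x x' -> htpy F i (psmap F k x) (psmap F k x').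
Proof.
  intros Hi Hh Hhw HE [K [j0 [j1 [e [Hcyl [<- <-]]]]]].
  exists K, (j0 ∘ k), (j1 ∘ k), e.
  split; [exact (rel_cylinder_cobase_change i h k l j0 j1 Hi Hh Hhw HE Hcyl)|].
  split; apply psmap_comp.
Qed.

(* y' is read off a retraction of the corner inclusion D -> J of
   [rel_cylinder_corner], and the homotopy lives on the double of J along D. *)
Lemma htpy_extend {Y Z : Presheaf C} (g : PMor Y Z) {A C0 E : C}
  (h : Hom A C0) (l : Hom C0 E) :
  cof h -> we h -> cof l ->
  forall (y : Y C0) (e : Y E) (z : Z E),
  psmap Y h y = psmap Y (l ∘ h) e -> psmap Z l z = g C0 y ->
  htpy Z (l ∘ h) (g E e) z ->
  exists y' : Y E, psmap Y l y' = y /\ htpy Z l (g E y') z.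
Proof.
  intros Hh Hhw Hl y e z Hye Hzy [J [s0 [s1 [G [Hcyl [HG0 HG1]]]]]].
  destruct (rel_cylinder_corner h l s0 s1 Hh Hhw Hl Hcyl)
    as [D [dC [dE [tau [HD [Htau1 [Htau0 [Htauc [Htauw Hdouble]]]]]]]]].
  destruct (psmap_glue Y Hh HD y e Hye) as [y0 [Hy0C Hy0E]].
  destruct (tcof_retraction Htauc Htauw) as [rho Hrho].
  set (U := psmap Y rho y0).
  assert (HUtau : psmap Y tau U = y0).
  { unfold U. rewrite <- psmap_comp, Hrho. apply psmap_id. }
  assert (HGtau : psmap Z tau G = g D y0).
  { apply (psmap_ext Z Hh HD); rewrite <- pm_nat, <- psmap_comp.
    - rewrite Htau1, psmap_comp, HG1, Hzy, Hy0C. reflexivity.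
    - rewrite Htau0, HG0, Hy0E. reflexivity. }
  destruct (pushout_exists tau tau Htauc) as [Q [q1 [q2 HQ]]].
  destruct (psmap_glue Z Htauc HQ (g J U) G) as [Gam [HGam1 HGam2]].
  { rewrite <- pm_nat, HUtau, HGtau. reflexivity. }
  exists (psmap Y s1 U). split.
  - rewrite <- psmap_comp, <- Htau1, psmap_comp, HUtau. exact Hy0C.
  - exists Q, (q1 ∘ s1), (q2 ∘ s1), Gam. split; [exact (Hdouble Q q1 q2 HQ)|].
    rewrite !psmap_comp, HGam1, HGam2, pm_nat. split; [reflexivity | exact HG1].
Qed.

Lemma pweq_comp {X Y Z : Presheaf C} (f : PMor X Y) (g : PMor Y Z) :
  pweq f -> pweq g -> pweq (pmor_comp g f).
Proof.
  intros Hf Hg A B i Hi u w Huw.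
  destruct (Hg A B i Hi (f A u) w Huw) as [b [Hb Hbw]].
  destruct (Hf A B i Hi u b (eq_sym Hb)) as [a [Ha Hab]].
  exists a. split; [exact Ha|].
  exact (htpy_trans Z i _ _ _ Hi (htpy_map g i _ _ Hab) Hbw).
Qed.

Lemma pweq_comp_cancel_l {X Y Z : Presheaf C} (f : PMor X Y) (g : PMor Y Z) :
  pweq g -> pweq (pmor_comp g f) -> pweq f.
Proof.
  intros Hg Hgf A B i Hi u w Huw.
  assert (Hgfu : pmor_comp g f A u = psmap Z i (g B w)).
  { cbn. rewrite Huw. apply pm_nat. }
  destruct (Hgf A B i Hi u (g B w) Hgfu) as [a [Ha [I [j0 [j1 [h [Hcyl [Hh0 Hh1]]]]]]]].
  exists a. split; [exact Ha|].
  destruct Hcyl as [P [in1 [in2 [j [p [HP [Hj [Hp [Hp1 [Hp2 [-> ->]]]]]]]]]]].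
  destruct (psmap_glue Y Hi HP (f B a) w) as [yP [HyP1 HyP2]].
  { rewrite <- pm_nat, Ha. exact Huw. }
  destruct (Hg P I j Hj yP h) as [hY [HhY _]].
  { apply (psmap_ext Z Hi HP); rewrite <- pm_nat, <- psmap_comp.
    - rewrite HyP1, Hh0. reflexivity.
    - rewrite HyP2, Hh1. reflexivity. }
  exists I, (j ∘ in1), (j ∘ in2), hY. split.
  - exists P, in1, in2, j, p. split; [exact HP|]. repeat split; assumption.
  - rewrite !psmap_comp, HhY. split; assumption.
Qed.

Lemma pweq_comp_cancel_r {X Y Z : Presheaf C} (f : PMor X Y) (g : PMor Y Z) :
  pweq f -> pweq (pmor_comp g f) -> pweq g.
Proof.
  intros Hf Hgf A B i Hi u w Huw.
  destruct (init_initial C A) as [zA _].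
  destruct (ps_init _ X) as [x0 _].
  destruct (Hf _ A zA (init_cof zA) x0 u) as [x [_ [IA [h0 [h1 [H [HcA [HH0 HH1]]]]]]]].
  { destruct (ps_init _ Y) as [y0 Hy0]. rewrite (Hy0 (f _ x0)). symmetry. apply Hy0. }
  destruct (rel_cylinder_ends_tcof zA h0 h1 (init_cof zA) HcA) as [[Hh0c Hh0w] [Hh1c Hh1w]].
  destruct (pushout_exists i h1 Hi) as [E [kB [kI HE]]].
  pose proof (pushout_cof Hi HE) as HkI.
  destruct (psmap_glue Z Hi HE w (g IA H)) as [W [HWB HWI]].
  { rewrite <- pm_nat, HH1. symmetry. exact Huw. }
  destruct (Hgf A E (kI ∘ h0) (cof_comp Hh0c HkI) x W) as [a [Ha HaW]].
  { cbn. rewrite psmap_comp, HWI, <- pm_nat, HH0. reflexivity. }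
  destruct (htpy_extend g h0 kI Hh0c Hh0w HkI H (f E a) W) as [y [Hy Hyw]];
    [rewrite HH0, <- pm_nat, Ha; reflexivity | exact HWI | exact HaW |].
  exists (psmap Y kB y). split.
  - rewrite <- psmap_comp, (pushout_comm HE), psmap_comp, Hy. exact HH1.
  - rewrite pm_nat, <- HWB.
    exact (htpy_cobase_change Z i h1 kB kI _ _ Hi Hh1c Hh1w HE Hyw).
Qed.

End Presheaves.

Theorem mainTheorem7 (C : CylinderCategory) (X Y Z : Presheaf C)
  (f : PMor X Y) (g : PMor Y Z) :
  (pweq f -> pweq g -> pweq (pmor_comp g f)) /\
  (pweq f -> pweq (pmor_comp g f) -> pweq g) /\
  (pweq g -> pweq (pmor_comp g f) -> pweq f).
Proof.
  split; [|split].
  - apply pweq_comp.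
  - apply pweq_comp_cancel_r.
  - apply pweq_comp_cancel_l.
Qed.
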